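(* Let $\mathcal{H}$ be a Hilbert space with inner product $[\cdot,\cdot]$, $K(\mathcal{H})$ the $C^*$-algebra of compact operators on $\mathcal{H}$, and $\mathcal{E}$ a Hilbert $K(\mathcal{H})$-module. Let $x, y\in\mathcal{E}$ and suppose $\langle x,x\rangle$ is a minimal projection. Then $x\parallel y$ if and only if there exists a unit vector $\xi\in\mathcal{H}$ such that $$\big|[\langle x,y\rangle\xi,\xi]\big| = \|y\|.$$
   Context: A (left) Hilbert $K(\mathcal{H})$-module is a left $K(\mathcal{H})$-module $\mathcal{E}$ with a $K(\mathcal{H})$-valued inner product $\langle\cdot,\cdot\rangle$, linear in the first variable and conjugate linear in the second, satisfying $\langle x,x\rangle\ge 0$ with equality iff $x=0$, $\langle ax,y\rangle = a\langle x,y\rangle$ and $\langle x,y\rangle^*=\langle y,x\rangle$, and complete for the norm $\|x\|=\|\langle x,x\rangle\|^{1/2}$. A projection $P\in B(\mathcal{H})$ is minimal if $PB(\mathcal{H})P=\mathbb{C}P$; equivalently $P=\xi\otimes\xi$ for a unit vector $\xi$, where $(\xi\otimes\eta)(\zeta)=[\zeta,\eta]\xi$. $x\parallel y$ (norm-parallel) means $\|x+\lambda y\|=\|x\|+\|y\|$ for some $\lambda\in\mathbb{C}$ with $|\lambda|=1$. *)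

From mathcomp Require Import all_boot all_algebra.
From mathcomp Require Import complex.
From mathcomp Require Import reals.
Set Implicit Arguments. Unset Strict Implicit. Unset Printing Implicit Defensive.
Import GRing.Theory Num.Theory.
Local Open Scope ring_scope.
Local Open Scope complex_scope.

Section Hilbert.
Variable R : realType.
Local Notation C := R[i].

Section Space.
Variable H : lmodType C.
Variable ip : H -> H -> C.  (* [.,.] : linear in the first, conj. linear in the second *)

Definition hnorm (xi : H) : R := Num.sqrt (complex.Re (ip xi xi)).

Definition is_cauchy_seq (V : Type) (nrm : V -> R) (sub : V -> V -> V)
  (u : nat -> V) : Prop :=
  forall e : R, 0 < e -> exists N : nat, forall m n : nat,
    (N <= m)%N -> (N <= n)%N -> nrm (sub (u m) (u n)) < e.

Definition seq_converges_to (V : Type) (nrm : V -> R) (sub : V -> V -> V)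
  (u : nat -> V) (l : V) : Prop :=
  forall e : R, 0 < e -> exists N : nat, forall n : nat,
    (N <= n)%N -> nrm (sub (u n) l) < e.

Definition is_hilbert : Prop :=
  [/\ (forall (a : C) (x y z : H), ip (a *: x + y) z = a * ip x z + ip y z),
      (forall x y : H, ip y x = (ip x y)^*),
      (forall x : H, 0 <= ip x x),
      (forall x : H, ip x x = 0 -> x = 0) &
      (forall u : nat -> H, is_cauchy_seq hnorm (fun a b => a - b) u ->
         exists l : H, seq_converges_to hnorm (fun a b => a - b) u l)].

Definition is_linear_op (T : H -> H) : Prop :=
  forall (a : C) (x y : H), T (a *: x + y) = a *: T x + T y.

Definition is_bounded_op (T : H -> H) : Prop :=
  is_linear_op T /\ exists M : R, forall x : H, hnorm (T x) <= M * hnorm x.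

Definition opnorm (T : H -> H) : R :=
  sup (fun r : R => exists xi : H, hnorm xi <= 1 /\ r = hnorm (T xi)).

Definition is_compact_op (T : H -> H) : Prop :=
  is_bounded_op T /\
  forall u : nat -> H, (exists M : R, forall n, hnorm (u n) <= M) ->
    exists phi : nat -> nat, (forall n, (phi n < phi n.+1)%N) /\
      exists l : H, seq_converges_to hnorm (fun a b => a - b) (fun n => T (u (phi n))) l.

Definition is_adjoint_of (T S : H -> H) : Prop :=
  forall xi eta : H, ip (T xi) eta = ip xi (S eta).

Definition is_positive_op (T : H -> H) : Prop :=
  forall xi : H, 0 <= ip (T xi) xi.

Definition is_projection (P : H -> H) : Prop :=
  is_bounded_op P /\ (forall xi, P (P xi) = P xi) /\ is_adjoint_of P P.

Definition is_minimal_projection (P : H -> H) : Prop :=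
  [/\ is_projection P,
      (exists xi : H, P xi <> 0) &
      (forall T : H -> H, is_bounded_op T ->
         exists c : C, forall xi : H, P (T (P xi)) = c *: P xi)].

Section Module.
Variable E : lmodType C.
Variable act : (H -> H) -> E -> E.
Variable eip : E -> E -> (H -> H).

Definition enorm (x : E) : R := Num.sqrt (opnorm (eip x x)).

Definition is_hilbert_KH_module : Prop :=
      (forall a : H -> H, is_compact_op a -> forall x y : E,
          act a (x + y) = act a x + act a y) /\
      (forall a b : H -> H, is_compact_op a -> is_compact_op b -> forall x : E,
          act (fun xi => a xi + b xi) x = act a x + act b x) /\
      (forall a b : H -> H, is_compact_op a -> is_compact_op b -> forall x : E,
          act (fun xi => a (b xi)) x = act a (act b x)) /\
      (forall a : H -> H, is_compact_op a -> forall (c : C) (x : E),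
          act (fun xi => c *: a xi) x = c *: act a x /\ act a (c *: x) = c *: act a x) /\
      (forall x y : E, is_compact_op (eip x y)) /\
      (forall (c : C) (x y z : E) (xi : H),
          eip (c *: x + y) z xi = c *: eip x z xi + eip y z xi) /\
      (forall (c : C) (x y z : E) (xi : H),
          eip z (c *: x + y) xi = c^* *: eip z x xi + eip z y xi) /\
      (forall x : E, is_positive_op (eip x x)) /\
      (forall x : E, (forall xi, eip x x xi = 0) -> x = 0) /\
      (forall a : H -> H, is_compact_op a -> forall (x y : E) (xi : H),
          eip (act a x) y xi = a (eip x y xi)) /\
      (forall x y : E, is_adjoint_of (eip y x) (eip x y)) /\
      (forall u : nat -> E, is_cauchy_seq enorm (fun a b => a - b) u ->
         exists l : E, seq_converges_to enorm (fun a b => a - b) u l).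

Definition norm_parallel (x y : E) : Prop :=
  exists lambda : C, `|lambda| = 1 /\ enorm (x + lambda *: y) = enorm x + enorm y.

End Module.
End Space.
End Hilbert.

From mathcomp Require Import all_boot all_order all_algebra.
From mathcomp Require Import complex.
From mathcomp Require Import classical_sets reals.
From mathcomp Require Import ring lra.

(* Let P = <x,x>. A unit vector xi0 spans the range of the minimal projection P,
   so P = xi0 (x) xi0, ||x|| = 1 and <x,y> = P <x,y>. Every xi gives a positive
   hermitian form s_xi(u,v) = [<u,v> xi, xi] on E, and ||u||^2 is the least w
   with s_xi(u,u) <= w ||xi||^2 for all xi (the norm of a positive operator is
   its numerical radius); Cauchy-Schwarz and Minkowski for the s_xi then give
   the triangle inequality.
   If |[<x,y> xi, xi]| = ||y|| for a unit xi, Cauchy-Schwarz for s_xi forces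
   s_xi(x,x) = 1 and s_xi(y,y) = ||y||^2, so s_xi(x + l y, x + l y) = (1 + ||y||)^2
   for the unimodular l aligned with [<x,y> xi, xi].
   Conversely let beta = [<x,y> xi0, xi0] and w = t xi0 + z with z orthogonal to
   xi0: then s_w(x,x) = |t|^2 and s_w(x,y) = (t beta + gamma z) t^* where
   gamma z = [<x,y> z, xi0]. Cauchy-Schwarz for s_w at a well-chosen w gives
   |gamma z|^2 <= ||z||^2 (||y||^2 - |beta|^2), whence
   s_w(x + l y, x + l y) <= ((1 + ||y||)^2 - (||y|| - |beta|)) ||w||^2.
   So |beta| < ||y|| would make ||x + l y|| < 1 + ||y||: if x is parallel to y,
   xi0 is the required vector. *)

Set Implicit Arguments. Unset Strict Implicit. Unset Printing Implicit Defensive.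
Import Order.TTheory GRing.Theory Num.Theory Normc.
Local Open Scope ring_scope.
Local Open Scope complex_scope.
Local Notation Re := complex.Re.
Local Notation Im := complex.Im.

Section ComplexModulus.
Variable R : rcfType.
Implicit Types (z : R[i]) (r : R).

Lemma sqr_normc_ReIm z : normc z ^+ 2 = Re z ^+ 2 + Im z ^+ 2.
Proof. by case: z => a b; rewrite /= sqr_sqrtr // addr_ge0 ?sqr_ge0. Qed.

Lemma normc_ge0 z : 0 <= normc z.
Proof. by case: z => a b; exact: sqrtr_ge0. Qed.

Lemma normr_complexE z : `|z| = (normc z)%:C.
Proof. by case: z. Qed.

Lemma normc_conj z : normc z^* = normc z.
Proof. by case: z => a b; rewrite /= sqrrN. Qed.

Lemma normc_real r : normc r%:C = `|r|.
Proof. by rewrite /= expr0n addr0 sqrtr_sqr. Qed.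

Lemma Re_le_normc z : Re z <= normc z.
Proof.
case: z => a b /=; apply: le_trans (ler_norm a) _.
by rewrite -sqrtr_sqr ler_sqrt ?addr_ge0 ?sqr_ge0 // lerDl sqr_ge0.
Qed.

Lemma mulJc z : z^* * z = (normc z ^+ 2)%:C.
Proof. by rewrite sqr_normc_ReIm; case: z => a b; congr (_ +i* _) => /=; ring. Qed.

Lemma Re_mulJrc r z : Re ((r%:C * z)^* * z) = r * normc z ^+ 2.
Proof. by rewrite sqr_normc_ReIm; case: z => a b /=; ring. Qed.

Lemma Re_mulcJ z : Re (z * z^*) = normc z ^+ 2.
Proof. by rewrite sqr_normc_ReIm; case: z => a b /=; ring. Qed.

End ComplexModulus.

Lemma discriminant_le (R : realFieldType) (K A D : R) : 0 <= K -> 0 <= A ->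
  (forall t, 0 <= t ^+ 2 * A * K - 2 * t * K + D) -> K <= A * D.
Proof.
move=> K_ge0 A_ge0 quad_ge0; have [A_gt0|A_le0] := ltrP 0 A.
  have AV : A * A^-1 = 1 by rewrite mulfV ?lt0r_neq0.
  have := quad_ge0 A^-1; set u := A^-1 => q_ge0.
  have : 0 <= A * (u ^+ 2 * A * K - 2 * u * K + D) by apply: mulr_ge0 => //; exact: ltW.
  have -> : A * (u ^+ 2 * A * K - 2 * u * K + D)
      = (A * u) ^+ 2 * K - 2 * (A * u) * K + A * D by ring.
  by rewrite AV; lra.
have A0 : A = 0 by apply/eqP; rewrite eq_le A_le0 A_ge0.
rewrite A0 mul0r leNgt; apply/negP => K_gt0.
have := quad_ge0 ((D + 1) / (2 * K)).
have -> : 2 * ((D + 1) / (2 * K)) * K = D + 1 by field; rewrite lt0r_neq0.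
rewrite A0 mulr0 mul0r; lra.
Qed.

Lemma le_of_forall_addsqr (R : rcfType) (g K M : R) : 0 <= K ->
  (forall r, 0 < r -> g <= M + K * r ^+ 2) -> g <= M.
Proof.
move=> K_ge0 slack; apply/ler_addgt0Pr => e e_gt0.
have K1_gt0 : 0 < K + 1 by rewrite ltr_wpDl.
have r2_gt0 : 0 < e / (K + 1) by rewrite divr_gt0.
have := slack (Num.sqrt (e / (K + 1))); rewrite sqrtr_gt0 r2_gt0 => /(_ isT) /le_trans; apply.
by rewrite sqr_sqrtr ?ltW // ltrD2l mulrA ltr_pdivrMr //; nra.
Qed.

Lemma amgm_le (R : realFieldType) (p q A Z G : R) : 0 <= p -> 0 <= q -> 0 <= A -> 0 <= G ->
  G ^+ 2 <= p * q * Z ^+ 2 -> 2 * A * G <= p * A ^+ 2 + q * Z ^+ 2.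
Proof.
move=> p_ge0 q_ge0 A_ge0 G_ge0 G2_le.
have AG2_le : A ^+ 2 * G ^+ 2 <= A ^+ 2 * (p * q * Z ^+ 2) by rewrite ler_wpM2l ?sqr_ge0.
have lhs_ge0 : 0 <= 2 * A * G by rewrite !mulr_ge0.
have rhs_ge0 : 0 <= p * A ^+ 2 + q * Z ^+ 2 by rewrite addr_ge0 // mulr_ge0 // sqr_ge0.
rewrite -ler_sqr ?nnegrE //.
have := sqr_ge0 (p * A ^+ 2 - q * Z ^+ 2); nra.
Qed.

Section HermitianForm.
Variables (R : rcfType) (V : lmodType R[i]) (s : V -> V -> R[i]).
Hypothesis s_linl : forall a u v w, s (a *: u + v) w = a * s u w + s v w.
Hypothesis s_herm : forall u v, s v u = (s u v)^*.
Hypothesis s_pos : forall u, 0 <= s u u.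

Lemma form0l w : s 0 w = 0.
Proof. by have := s_linl (-1) w w w; rewrite scaleN1r addNr mulN1r addNr. Qed.

Lemma formDl u v w : s (u + v) w = s u w + s v w.
Proof. by have := s_linl 1 u v w; rewrite scale1r mul1r. Qed.

Lemma formZl a u w : s (a *: u) w = a * s u w.
Proof. by have := s_linl a u 0 w; rewrite !addr0 form0l addr0. Qed.

Lemma formNl u w : s (- u) w = - s u w.
Proof. by rewrite -scaleN1r formZl mulN1r. Qed.

Lemma formDr u v w : s w (u + v) = s w u + s w v.
Proof. by rewrite s_herm formDl rmorphD /= -!s_herm. Qed.

Lemma formZr a u w : s w (a *: u) = a^* * s w u.
Proof. by rewrite s_herm formZl rmorphM /= -s_herm. Qed.

Definition qform u := Re (s u u).

Lemma qform_ge0 u : 0 <= qform u.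
Proof. by have := s_pos u; rewrite lecE => /andP[]. Qed.

Lemma form_diag u : s u u = (qform u)%:C.
Proof. by have := s_pos u; rewrite lecE /qform; case: (s u u) => a b /= /andP[/eqP ->]. Qed.

Lemma qformZ a u : qform (a *: u) = normc a ^+ 2 * qform u.
Proof.
rewrite /qform formZl formZr mulrA form_diag sqr_normc_ReIm.
by case: a => a1 a2 /=; ring.
Qed.

Lemma qformD u v : qform (u + v) = qform u + qform v + 2 * Re (s u v).
Proof.
rewrite /qform formDl !formDr (s_herm u v).
by case: (s u u) => ? ?; case: (s v v) => ? ?; case: (s u v) => ? ? /=; ring.
Qed.

Lemma form_CauchySchwarz u v : normc (s u v) ^+ 2 <= qform u * qform v.
Proof.
apply: discriminant_le; [exact: sqr_ge0 | exact: qform_ge0 | move=> t].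
have := qform_ge0 ((- (t%:C * (s u v)^*)) *: u + v).
rewrite qformD qformZ normcN normcM normc_real normc_conj formZl.
rewrite exprMn real_normK ?num_real // sqr_normc_ReIm.
by case: (s u v) => c1 c2 /=; nra.
Qed.

Lemma qformD_le u v : qform (u + v) <= (Num.sqrt (qform u) + Num.sqrt (qform v)) ^+ 2.
Proof.
have Re_le : Re (s u v) <= Num.sqrt (qform u) * Num.sqrt (qform v).
  apply: le_trans (Re_le_normc _) _.
  rewrite -ler_sqr ?nnegrE ?normc_ge0 ?mulr_ge0 ?sqrtr_ge0 //.
  by rewrite exprMn !sqr_sqrtr ?qform_ge0 // form_CauchySchwarz.
rewrite qformD sqrrD !sqr_sqrtr ?qform_ge0 //; lra.
Qed.

End HermitianForm.

Section HilbertSpace.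
Variables (R : realType) (H : lmodType R[i]) (ip : H -> H -> R[i]).
Hypothesis hH : is_hilbert ip.

Lemma ip_linl a u v w : ip (a *: u + v) w = a * ip u w + ip v w.
Proof. by case: hH. Qed.

Lemma ip_herm u v : ip v u = (ip u v)^*.
Proof. by case: hH. Qed.

Lemma ip_pos u : 0 <= ip u u.
Proof. by case: hH. Qed.

Lemma ip_eq0 u : ip u u = 0 -> u = 0.
Proof. by case: hH => _ _ _ + _; apply. Qed.

Local Notation hn := (hnorm ip).

Lemma hnorm_ge0 u : 0 <= hn u.
Proof. exact: sqrtr_ge0. Qed.

Lemma sqr_hnorm u : hn u ^+ 2 = qform ip u.
Proof. by rewrite sqr_sqrtr // (qform_ge0 ip_pos). Qed.

Lemma ip_diag u : ip u u = (hn u ^+ 2)%:C.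
Proof. by rewrite sqr_hnorm (form_diag ip_pos). Qed.

Lemma hnormZ a u : hn (a *: u) = normc a * hn u.
Proof.
have := qformZ ip_linl ip_herm ip_pos a u; rewrite /qform /hnorm => ->.
by rewrite sqrtrM ?sqr_ge0 // sqrtr_sqr ger0_norm ?normc_ge0.
Qed.

Lemma hnorm_eq0 u : hn u = 0 -> u = 0.
Proof. by move=> hu0; apply: ip_eq0; rewrite ip_diag hu0 expr0n. Qed.

Lemma hnorm0 : hn 0 = 0.
Proof. by rewrite /hnorm (form0l ip_linl) sqrtr0. Qed.

Lemma hnorm_normalize u : hn u != 0 -> hn ((hn u)^-1%:C *: u) = 1.
Proof. by move=> hu0; rewrite hnormZ normc_real ger0_norm ?invr_ge0 ?hnorm_ge0 // mulVf. Qed.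

Lemma ip_ext u v : (forall w, ip u w = ip v w) -> u = v.
Proof.
move=> eq_uv; apply/eqP; rewrite -subr_eq0; apply/eqP; apply: ip_eq0.
by rewrite (formDl ip_linl) (formNl ip_linl) eq_uv addrN.
Qed.

Lemma normc_ip_le u v : normc (ip u v) <= hn u * hn v.
Proof.
rewrite -ler_sqr ?nnegrE ?normc_ge0 ?mulr_ge0 ?hnorm_ge0 // exprMn !sqr_hnorm.
exact: (form_CauchySchwarz ip_linl ip_herm ip_pos).
Qed.

Section LinearOperator.
Variable T : H -> H.
Hypothesis T_lin : is_linear_op T.

Lemma linear_op0 : T 0 = 0.
Proof. by have := T_lin (-1) 0 0; rewrite scaleN1r oppr0 addr0 scaleN1r addNr. Qed.

Lemma linear_opZ a u : T (a *: u) = a *: T u.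
Proof. by have := T_lin a u 0; rewrite !addr0 linear_op0 addr0. Qed.

End LinearOperator.

Definition opnorm_set (T : H -> H) : set R :=
  fun r => exists u, hn u <= 1 /\ r = hn (T u).

Lemma opnorm_set_nonempty T : nonempty (opnorm_set T).
Proof. by exists (hn (T 0)), 0; rewrite hnorm0 ler01. Qed.

Lemma opnorm_ub T u : is_bounded_op ip T -> hn u <= 1 -> hn (T u) <= opnorm ip T.
Proof.
move=> [_ [M T_le]] u_le1; apply: sup_upper_bound; last by exists u.
split; first exact: opnorm_set_nonempty.
exists `|M| => _ [v [v_le1 ->]]; apply: le_trans (T_le v) _.
by rewrite (le_trans (ler_wpM2r (hnorm_ge0 v) (ler_norm M))) // ler_piMr ?hnorm_ge0.
Qed.

Lemma opnorm_le T w : (forall u, hn u <= 1 -> hn (T u) <= w) -> opnorm ip T <= w.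
Proof. by move=> T_le; apply: ge_sup; [exact: opnorm_set_nonempty | move=> _ [u [/T_le ? ->]]]. Qed.

Lemma opnorm_ge0 T : is_bounded_op ip T -> 0 <= opnorm ip T.
Proof.
by move=> T_bd; apply: le_trans (hnorm_ge0 _) (opnorm_ub (u := 0) T_bd _); rewrite hnorm0 ler01.
Qed.

Lemma opnorm_bound T u : is_bounded_op ip T -> hn (T u) <= opnorm ip T * hn u.
Proof.
move=> T_bd; have [hu0|hu_neq0] := eqVneq (hn u) 0.
  by rewrite hu0 mulr0 (hnorm_eq0 hu0) (linear_op0 T_bd.1) hnorm0.
have hu_gt0 : 0 < hn u by rewrite lt_def hu_neq0 hnorm_ge0.
have := opnorm_ub (u := (hn u)^-1%:C *: u) T_bd; rewrite hnorm_normalize // lexx => /(_ isT).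
rewrite (linear_opZ T_bd.1) hnormZ normc_real ger0_norm ?invr_ge0 ?hnorm_ge0 //.
by rewrite -(ler_pM2l hu_gt0) mulVKf ?lt0r_neq0 // mulrC.
Qed.

Lemma opnorm_le_numrad T w : is_linear_op T -> is_adjoint_of ip T T ->
  is_positive_op ip T -> 0 <= w -> (forall u, Re (ip (T u) u) <= w * hn u ^+ 2) ->
  opnorm ip T <= w.
Proof.
move=> T_lin T_adj T_pos w_ge0 numrad; apply: opnorm_le => u u_le1.
pose sT u v := ip (T u) v.
have sT_linl a u1 u2 v : sT (a *: u1 + u2) v = a * sT u1 v + sT u2 v by rewrite /sT T_lin ip_linl.
have sT_herm u1 u2 : sT u2 u1 = (sT u1 u2)^* by rewrite /sT T_adj ip_herm.
have := form_CauchySchwarz sT_linl sT_herm T_pos u (T u).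
rewrite /sT ip_diag normc_real ger0_norm ?sqr_ge0 //.
have Q1 : qform sT u <= w.
  apply: le_trans (numrad u) _; rewrite ler_piMr // expr_le1 ?hnorm_ge0 //.
have Q2 : qform sT (T u) <= w * hn (T u) ^+ 2 := numrad (T u).
have := hnorm_ge0 (T u); set r := hn (T u) => r_ge0 cs.
have {cs} : r ^+ 2 * r ^+ 2 <= w ^+ 2 * r ^+ 2.
  rewrite -expr2 (le_trans cs) // expr2 -mulrA.
  by apply: ler_pM => //; apply: qform_ge0.
apply: contraTT; rewrite -!ltNge => w_lt_r.
by rewrite ltr_pM2r ?exprn_gt0 ?(le_lt_trans w_ge0) //; nra.
Qed.

End HilbertSpace.

Section HilbertModule.
Variables (R : realType) (H : lmodType R[i]) (ip : H -> H -> R[i]).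
Hypothesis hH : is_hilbert ip.
Variables (E : lmodType R[i]) (act : (H -> H) -> E -> E) (eip : E -> E -> H -> H).
Hypothesis hE : is_hilbert_KH_module ip act eip.

Local Notation hn := (hnorm ip).
Local Notation en := (enorm ip eip).

Lemma eip_compact u v : is_compact_op ip (eip u v).
Proof. by case: hE => _ [_ [_ [_ [+ _]]]]. Qed.

Lemma eip_linl a u v w xi : eip (a *: u + v) w xi = a *: eip u w xi + eip v w xi.
Proof. by case: hE => _ [_ [_ [_ [_ [+ _]]]]]. Qed.

Lemma eip_linr a u v w xi : eip w (a *: u + v) xi = a^* *: eip w u xi + eip w v xi.
Proof. by case: hE => _ [_ [_ [_ [_ [_ [+ _]]]]]]. Qed.

Lemma eip_pos u : is_positive_op ip (eip u u).
Proof. by case: hE => _ [_ [_ [_ [_ [_ [_ [+ _]]]]]]]. Qed.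

Lemma eip_eq0 u : (forall xi, eip u u xi = 0) -> u = 0.
Proof. by case: hE => _ [_ [_ [_ [_ [_ [_ [_ [+ _]]]]]]]]; apply. Qed.

Lemma eip_act a u v xi : is_compact_op ip a -> eip (act a u) v xi = a (eip u v xi).
Proof. by case: hE => _ [_ [_ [_ [_ [_ [_ [_ [_ [+ _]]]]]]]]] => /[apply]. Qed.

Lemma eip_adj u v : is_adjoint_of ip (eip v u) (eip u v).
Proof. by case: hE => _ [_ [_ [_ [_ [_ [_ [_ [_ [_ [+ _]]]]]]]]]]. Qed.

Lemma eip_bounded u v : is_bounded_op ip (eip u v).
Proof. by case: (eip_compact u v). Qed.

Lemma eipBl u v w xi : eip (u - v) w xi = eip u w xi - eip v w xi.
Proof. by rewrite addrC -scaleN1r eip_linl scaleN1r addrC. Qed.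

Lemma eipBr u v w xi : eip w (u - v) xi = eip w u xi - eip w v xi.
Proof. by rewrite addrC -scaleN1r eip_linr rmorphN rmorph1 scaleN1r addrC. Qed.

Definition vsform xi u v := ip (eip u v xi) xi.

Lemma vsform_linl xi a u v w : vsform xi (a *: u + v) w = a * vsform xi u w + vsform xi v w.
Proof. by rewrite /vsform eip_linl (ip_linl hH). Qed.

Lemma vsform_herm xi u v : vsform xi v u = (vsform xi u v)^*.
Proof. by rewrite /vsform eip_adj (ip_herm hH). Qed.

Lemma vsform_pos xi u : 0 <= vsform xi u u.
Proof. exact: eip_pos. Qed.

Lemma vsformZr xi a u v : vsform xi u (a *: v) = a^* * vsform xi u v.
Proof. exact: (formZr (vsform_linl xi) (vsform_herm xi)). Qed.

Lemma qvsformD xi u v :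
  qform (vsform xi) (u + v) = qform (vsform xi) u + qform (vsform xi) v + 2 * Re (vsform xi u v).
Proof. exact: (qformD (vsform_linl xi) (vsform_herm xi)). Qed.

Lemma qvsformZ xi a u : qform (vsform xi) (a *: u) = normc a ^+ 2 * qform (vsform xi) u.
Proof. exact: (qformZ (vsform_linl xi) (vsform_herm xi) (vsform_pos xi)). Qed.

Lemma vsform_CauchySchwarz xi u v :
  normc (vsform xi u v) ^+ 2 <= qform (vsform xi) u * qform (vsform xi) v.
Proof. exact: (form_CauchySchwarz (vsform_linl xi) (vsform_herm xi) (vsform_pos xi)). Qed.

Lemma enorm_ge0 u : 0 <= en u.
Proof. exact: sqrtr_ge0. Qed.

Lemma sqr_enorm u : en u ^+ 2 = opnorm ip (eip u u).
Proof. by rewrite sqr_sqrtr // (opnorm_ge0 hH (eip_bounded u u)). Qed.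

Lemma qvsform_le xi u : qform (vsform xi) u <= en u ^+ 2 * hn xi ^+ 2.
Proof.
apply: le_trans (Re_le_normc _) _; apply: le_trans (normc_ip_le hH _ _) _.
rewrite sqr_enorm expr2 mulrA ler_wpM2r ?hnorm_ge0 //.
exact: (opnorm_bound hH _ (eip_bounded u u)).
Qed.

Lemma sqrt_qvsform_le xi u : Num.sqrt (qform (vsform xi) u) <= en u * hn xi.
Proof.
rewrite -(ger0_norm (mulr_ge0 (enorm_ge0 u) (hnorm_ge0 ip xi))) -sqrtr_sqr.
by rewrite ler_sqrt ?sqr_ge0 // exprMn qvsform_le.
Qed.

Lemma enorm_sqr_le u w : 0 <= w ->
  (forall xi, qform (vsform xi) u <= w * hn xi ^+ 2) -> en u ^+ 2 <= w.
Proof.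
move=> w_ge0 numrad; rewrite sqr_enorm.
exact: (opnorm_le_numrad hH (eip_bounded u u).1 (eip_adj u u) (eip_pos u) w_ge0).
Qed.

Lemma enormD u v : en (u + v) <= en u + en v.
Proof.
have uv_ge0 : 0 <= en u + en v by rewrite addr_ge0 ?enorm_ge0.
rewrite -ler_sqr ?nnegrE ?enorm_ge0 //.
apply: enorm_sqr_le => [|xi]; first exact: sqr_ge0.
apply: le_trans (qformD_le (vsform_linl xi) (vsform_herm xi) (vsform_pos xi) u v) _.
rewrite -exprMn ler_sqr ?nnegrE ?mulr_ge0 ?hnorm_ge0 //; last by rewrite addr_ge0 ?sqrtr_ge0.
by rewrite mulrDl lerD ?sqrt_qvsform_le.
Qed.

Lemma enormZ_le a u : en (a *: u) <= normc a * en u.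
Proof.
rewrite -ler_sqr ?nnegrE ?enorm_ge0 ?mulr_ge0 ?normc_ge0 ?enorm_ge0 //.
apply: enorm_sqr_le => [|xi]; first exact: sqr_ge0.
rewrite qvsformZ exprMn.
by apply: le_trans (ler_wpM2l (sqr_ge0 (normc a)) (qvsform_le xi u)) _; rewrite mulrA.
Qed.

Lemma enorm_eq0 u : en u = 0 -> u = 0.
Proof.
move=> u0; apply: eip_eq0 => xi; apply: (hnorm_eq0 hH); apply/eqP.
rewrite eq_le hnorm_ge0 andbT (le_trans (opnorm_bound hH xi (eip_bounded u u))) //.
by rewrite -sqr_enorm u0 expr0n mul0r.
Qed.

End HilbertModule.

Section MinimalProjection.
Variables (R : realType) (H : lmodType R[i]) (ip : H -> H -> R[i]).
Hypothesis hH : is_hilbert ip.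
Variables (E : lmodType R[i]) (act : (H -> H) -> E -> E) (eip : E -> E -> H -> H).
Hypothesis hE : is_hilbert_KH_module ip act eip.
Variable x : E.
Hypothesis hx : is_minimal_projection ip (eip x x).

Local Notation hn := (hnorm ip).
Local Notation en := (enorm ip eip).
Local Notation P := (eip x x).

Lemma proj_idem xi : P (P xi) = P xi.
Proof. by case: hx => [[_ [+ _]] _ _]. Qed.

Lemma hnorm_proj_le xi : hn (P xi) <= hn xi.
Proof.
have sqr_hP : hn (P xi) ^+ 2 <= hn xi * hn (P xi).
  rewrite (sqr_hnorm hH) /qform (eip_adj hE) proj_idem.
  exact: le_trans (Re_le_normc _) (normc_ip_le hH _ _).
have := hnorm_ge0 ip (P xi); rewrite le_eqVlt => /predU1P[<-|hP_gt0]; first exact: hnorm_ge0.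
by rewrite -(ler_pM2r hP_gt0) -expr2.
Qed.

Lemma exists_unit_fixed : exists xi0, P xi0 = xi0 /\ hn xi0 = 1.
Proof.
case: hx => _ [xi Pxi_neq0] _; have hP_neq0 : hn (P xi) != 0.
  by apply: contra_notN Pxi_neq0 => /eqP/(hnorm_eq0 hH).
exists ((hn (P xi))^-1%:C *: P xi); split; last exact: hnorm_normalize.
by rewrite (linear_opZ (eip_bounded hE x x).1) proj_idem.
Qed.

Lemma enorm_x : en x = 1.
Proof.
have [xi0 [Pxi0 hxi0]] := exists_unit_fixed.
rewrite /enorm -sqrtr1; congr Num.sqrt; apply/eqP; rewrite eq_le; apply/andP; split.
  by apply: (opnorm_le hH) => xi xi_le1; exact: le_trans (hnorm_proj_le xi) xi_le1.
by rewrite -{1}hxi0 -{1}Pxi0 (opnorm_ub hH (eip_bounded hE x x)) ?hxi0.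
Qed.

Lemma act_proj : act P x = x.
Proof.
have P_compact := eip_compact hE x x.
have eip_Px_x xi : eip (act P x) x xi = P xi by rewrite (eip_act hE _ _ _ P_compact) proj_idem.
have eip_x_Px xi : eip x (act P x) xi = P xi.
  by apply: (ip_ext hH) => eta; rewrite (eip_adj hE) eip_Px_x (eip_adj hE).
have eip_Px_Px xi : eip (act P x) (act P x) xi = P xi.
  by rewrite (eip_act hE _ _ _ P_compact) eip_x_Px proj_idem.
apply/eqP; rewrite eq_sym -subr_eq0; apply/eqP; apply: (eip_eq0 hE) => xi.
by rewrite (eipBl hE) !(eipBr hE) eip_Px_x eip_x_Px eip_Px_Px !subrr.
Qed.

Lemma eip_x_proj y xi : eip x y xi = P (eip x y xi).
Proof. by rewrite -{1}act_proj (eip_act hE _ _ _ (eip_compact hE x x)). Qed.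

Section FixedUnitVector.
Variable xi0 : H.
Hypotheses (Pxi0 : P xi0 = xi0) (hxi0 : hn xi0 = 1).

Lemma ip_xi0 : ip xi0 xi0 = 1.
Proof. by rewrite (ip_diag hH) hxi0 expr1n. Qed.

Lemma proj_rank_one w : P w = ip w xi0 *: xi0.
Proof.
pose T u := ip u xi0 *: w.
have T_bd : is_bounded_op ip T.
  split=> [a u v|]; first by rewrite /T (ip_linl hH) scalerDl scalerA.
  exists (hn w) => u; rewrite /T (hnormZ hH) mulrC ler_wpM2l ?hnorm_ge0 //.
  by have := normc_ip_le hH u xi0; rewrite hxi0 mulr1.
case: hx => _ _ /(_ T T_bd) [c Pc].
have := Pc xi0; rewrite Pxi0 /T ip_xi0 scale1r => Pw.
rewrite Pw; congr (_ *: _).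
by rewrite -[c]mulr1 -ip_xi0 -(formZl (ip_linl hH)) -Pw (eip_adj hE) Pxi0.
Qed.

Lemma orth_decomp w : exists t z, ip z xi0 = 0 /\ w = t *: xi0 + z.
Proof.
exists (ip w xi0), (w - ip w xi0 *: xi0); split; last by rewrite addrC subrK.
by rewrite (formDl (ip_linl hH)) (formNl (ip_linl hH)) (formZl (ip_linl hH)) ip_xi0 mulr1 subrr.
Qed.

Section OrthogonalDecomposition.
Variables (t : R[i]) (z : H).
Hypothesis z_perp : ip z xi0 = 0.
Local Notation w := (t *: xi0 + z).

Lemma ip_decomp_xi0 : ip w xi0 = t.
Proof. by rewrite (ip_linl hH) ip_xi0 z_perp mulr1 addr0. Qed.

Lemma sqr_hnorm_decomp : hn w ^+ 2 = normc t ^+ 2 + hn z ^+ 2.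
Proof.
rewrite !(sqr_hnorm hH) (qformD (ip_linl hH) (ip_herm hH)).
rewrite (qformZ (ip_linl hH) (ip_herm hH) (ip_pos hH)) -(sqr_hnorm hH) hxi0 expr1n mulr1.
by rewrite (formZl (ip_linl hH)) (ip_herm hH z) z_perp conjc0 mulr0 mulr0 addr0.
Qed.

Lemma vsform_decomp y :
  vsform ip eip w x y = (t * ip (eip x y xi0) xi0 + ip (eip x y z) xi0) * t^*.
Proof.
rewrite /vsform (eip_x_proj y) proj_rank_one (formZl (ip_linl hH)) (ip_herm hH w) ip_decomp_xi0.
by rewrite ((eip_bounded hE x y).1) (ip_linl hH).
Qed.

Lemma qvsform_x_decomp : qform (vsform ip eip w) x = normc t ^+ 2.
Proof.
rewrite /qform vsform_decomp Pxi0 ip_xi0 mulr1.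
by rewrite (eip_adj hE) Pxi0 z_perp addr0 Re_mulcJ.
Qed.

End OrthogonalDecomposition.

Section Parallel.
Variable y : E.
Local Notation beta := (ip (eip x y xi0) xi0).
Local Notation gamma z := (ip (eip x y z) xi0).
Local Notation Y := (en y).

Lemma normc_decomp_le t z : ip z xi0 = 0 -> 0 < normc t ->
  normc (t * beta + gamma z) ^+ 2 <= Y ^+ 2 * (normc t ^+ 2 + hn z ^+ 2).
Proof.
move=> z_perp t_gt0; set w := t *: xi0 + z.
have := vsform_CauchySchwarz hH hE w x y.
rewrite vsform_decomp // qvsform_x_decomp // normcM normc_conj exprMn mulrC.
rewrite ler_pM2l ?exprn_gt0 // => /le_trans; apply.
by rewrite -sqr_hnorm_decomp // (qvsform_le hH hE).
Qed.

Lemma orth_coeff_le z : ip z xi0 = 0 -> normc beta < Y ->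
  normc (gamma z) ^+ 2 <= hn z ^+ 2 * (Y ^+ 2 - normc beta ^+ 2).
Proof.
move=> z_perp beta_lt_Y.
have gap_ge0 : 0 <= Y ^+ 2 - normc beta ^+ 2.
  by rewrite subr_ge0 ler_sqr ?nnegrE ?normc_ge0 ?enorm_ge0 // ltW.
have [gamma0|gamma_neq0] := eqVneq (gamma z) 0.
  by rewrite gamma0 normc0 expr0n /= mulr_ge0 ?sqr_ge0.
have [beta0|beta_neq0] := eqVneq beta 0.
  rewrite beta0 normc0 expr0n subr0 mulrC.
  apply: (le_of_forall_addsqr (sqr_ge0 Y)) => r r_gt0.
  have := normc_decomp_le (t := r%:C) z_perp; rewrite beta0 mulr0 add0r normc_real.
  by rewrite gtr0_norm // => /(_ r_gt0); rewrite mulrDr addrC mulrC.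
have Z_gt0 : 0 < hn z.
  rewrite lt_def hnorm_ge0 andbT; apply: contra_neq gamma_neq0 => /(hnorm_eq0 hH) ->.
  by rewrite (linear_op0 (eip_bounded hE x y).1) (form0l (ip_linl hH)).
have b_gt0 : 0 < normc beta.
  by rewrite lt_def normc_ge0 andbT; apply: contra_neq beta_neq0 => /eq0_normc.
(* With t = beta^* ||z||^2 and z' = (gamma z)^* z, both t beta + gamma z' and
   ||t xi0 + z'||^2 / ||z||^2 are the positive real |beta|^2 ||z||^2 + |gamma z|^2. *)
have := normc_decomp_le (t := beta^* * (hn z ^+ 2)%:C) (z := (gamma z)^* *: z).
rewrite (formZl (ip_linl hH)) z_perp mulr0 => /(_ erefl).
rewrite !normcM normc_conj normc_real ger0_norm ?sqr_ge0 // mulr_gt0 ?exprn_gt0 // => /(_ isT).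
rewrite (linear_opZ (eip_bounded hE x y).1) (formZl (ip_linl hH)) mulrAC !mulJc.
rewrite -rmorphM -rmorphD normc_real ger0_norm; last first.
  by apply: addr_ge0; [apply: mulr_ge0 |]; exact: sqr_ge0.
rewrite (hnormZ hH) normc_conj.
set b := normc beta; set G := normc (gamma z); set Z := hn z.
have k_gt0 : 0 < b ^+ 2 * Z ^+ 2 + G ^+ 2.
  exact: ltr_wpDr (sqr_ge0 G) (mulr_gt0 (exprn_gt0 2 b_gt0) (exprn_gt0 2 Z_gt0)).
have -> : Y ^+ 2 * ((b * Z ^+ 2) ^+ 2 + (G * Z) ^+ 2)
    = Y ^+ 2 * Z ^+ 2 * (b ^+ 2 * Z ^+ 2 + G ^+ 2) by ring.
rewrite [X in X <= _]expr2 ler_pM2r //; lra.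
Qed.

Lemma qvsform_parallel_le l w : normc l = 1 -> normc beta < Y ->
  qform (vsform ip eip w) (x + l *: y) <= ((1 + Y) ^+ 2 - (Y - normc beta)) * hn w ^+ 2.
Proof.
move=> l1 beta_lt_Y; have [t [z [z_perp ->]]] := orth_decomp w.
rewrite (qvsformD hH hE) (qvsformZ hH hE) l1 expr1n mul1r (vsformZr hH hE).
rewrite vsform_decomp // qvsform_x_decomp // sqr_hnorm_decomp //.
have Qy := qvsform_le hH hE (t *: xi0 + z) y; rewrite sqr_hnorm_decomp // in Qy.
have Re_le : Re (l^* * ((t * beta + gamma z) * t^*))
    <= (normc t * normc beta + normc (gamma z)) * normc t.
  apply: le_trans (Re_le_normc _) _.
  rewrite !normcM !normc_conj l1 mul1r ler_wpM2r ?normc_ge0 //.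
  by apply: le_trans (le_normcD _ _) _; rewrite normcM.
have G2_le := orth_coeff_le z_perp beta_lt_Y.
move: Qy Re_le G2_le beta_lt_Y (normc_ge0 beta) (normc_ge0 t).
move: (normc_ge0 (gamma z)) (hnorm_ge0 ip z) (enorm_ge0 ip eip y).
set b := normc beta; set A := normc t; set G := normc (gamma z); set Z := hn z.
move=> G_ge0 Z_ge0 Y_ge0 Qy Re_le G2_le b_lt_Y b_ge0 A_ge0.
have amgm : 2 * A * G <= (Y - b) * A ^+ 2 + (1 + Y + b) * Z ^+ 2.
  apply: amgm_le => //; [lra | lra |].
  apply: le_trans G2_le _; rewrite mulrC; apply: ler_wpM2r; [exact: sqr_ge0 | nra].
lra.
Qed.

End Parallel.

End FixedUnitVector.

Lemma parallel_witness y : norm_parallel ip eip x y ->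
  exists xi, hn xi = 1 /\ `|ip (eip x y xi) xi| = (en y)%:C.
Proof.
case=> l [l1 x_par_y]; have [xi0 [Pxi0 hxi0]] := exists_unit_fixed.
have {}l1 : normc l = 1 by apply: complexI; rewrite -normr_complexE.
exists xi0; split => //; rewrite normr_complexE; congr _%:C.
have Qx : qform (vsform ip eip xi0) x = 1 by rewrite /qform /vsform Pxi0 (ip_xi0 hxi0).
have b_le_Y : normc (ip (eip x y xi0) xi0) <= en y.
  rewrite -ler_sqr ?nnegrE ?normc_ge0 ?(enorm_ge0 ip eip) //.
  apply: le_trans (vsform_CauchySchwarz hH hE xi0 x y) _.
  by rewrite Qx mul1r; have := qvsform_le hH hE xi0 y; rewrite hxi0 expr1n mulr1.
apply/eqP; rewrite eq_le b_le_Y /= leNgt; apply/negP => b_lt_Y.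
have := enorm_sqr_le hH hE _ (fun w => qvsform_parallel_le Pxi0 hxi0 w l1 b_lt_Y).
rewrite x_par_y enorm_x; have := normc_ge0 (ip (eip x y xi0) xi0); nra.
Qed.

Lemma parallel_of_witness y xi : hn xi = 1 -> `|ip (eip x y xi) xi| = (en y)%:C ->
  norm_parallel ip eip x y.
Proof.
move=> hxi; rewrite normr_complexE => /complexI; set c := ip (eip x y xi) xi => c_eq.
have [y0|Y_neq0] := eqVneq (en y) 0.
  have y_eq0 := enorm_eq0 hH hE y0; rewrite y_eq0 in y0 *.
  by exists 1; rewrite normr1 scaler0 addr0 y0 addr0.
have Y_gt0 : 0 < en y by rewrite lt_def Y_neq0 enorm_ge0.
pose l := (en y)^-1%:C * c.
have l1 : normc l = 1.
  by rewrite normcM normc_real ger0_norm ?invr_ge0 ?ltW // c_eq mulVf.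
exists l; split; first by rewrite normr_complexE l1.
apply/eqP; rewrite eq_le (le_trans (enormD hH hE _ _)) /=; last first.
  by rewrite lerD2l (le_trans (enormZ_le hH hE _ _)) // l1 mul1r.
have Q_le u : qform (vsform ip eip xi) u <= en u ^+ 2.
  by have := qvsform_le hH hE xi u; rewrite hxi expr1n mulr1.
have := vsform_CauchySchwarz hH hE xi x y.
have := Q_le x; have := Q_le y; have := Q_le (x + l *: y).
rewrite (qvsformD hH hE) (qvsformZ hH hE) l1 expr1n mul1r.
have -> : Re (vsform ip eip xi x (l *: y)) = en y.
  by rewrite (vsformZr hH hE) /vsform -/c Re_mulJrc c_eq expr2 mulKf.
rewrite enorm_x c_eq expr1n.
have Qx_ge0 := qform_ge0 (vsform_pos hE xi) x; have Qy_ge0 := qform_ge0 (vsform_pos hE xi) y.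
set Qx := qform _ x; set Qy := qform _ y => Qxy_le Qy_le Qx_le1 cs.
have Qx1 : 1 <= Qx.
  rewrite -(ler_pM2l (exprn_gt0 2 Y_gt0)) mulr1 (le_trans cs) // mulrC.
  by apply: ler_wpM2r.
have QyY : en y ^+ 2 <= Qy by rewrite (le_trans cs) // ler_piMl.
rewrite -ler_sqr ?nnegrE ?addr_ge0 ?ler01 ?(enorm_ge0 ip eip) //; lra.
Qed.

End MinimalProjection.

Theorem theorem2p4 (R : realType) (H : lmodType R[i]) (ip : H -> H -> R[i])
  (hH : is_hilbert ip)
  (E : lmodType R[i]) (act : (H -> H) -> E -> E) (eip : E -> E -> (H -> H))
  (hE : is_hilbert_KH_module ip act eip)
  (x y : E) (hx : is_minimal_projection ip (eip x x)) :
  norm_parallel ip eip x y <->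
  exists xi : H, hnorm ip xi = 1 /\
    `|ip (eip x y xi) xi| = (enorm ip eip y)%:C.
Proof.
split; first exact: (parallel_witness hH hE hx).
by case=> xi [hxi c_eq]; exact: (parallel_of_witness hH hE hx hxi c_eq).
Qed.
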